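(* Let $G$ be a connected graph containing a longest path $L=x_0x_1\ldots x_p$ with $p\ge 2$, and a path $P=y_0y_1\ldots y_s$ with $s\ge p-2$. Then $|V(L)\cap V(P)|\ge 1$, unless $p$ is even, $s=p-2$, and $x_{p/2}y_{s/2}$ is a cut-edge of $G$.
   Context: All graphs are finite, simple and undirected. The length of a path is its number of edges; a longest path is one of maximum length in $G$. A cut-edge is an edge whose removal disconnects the graph. *)

From mathcomp Require Import all_boot.
Set Implicit Arguments. Unset Strict Implicit. Unset Printing Implicit Defensive.

Section Graph.
Variable T : finType.

Definition simple_graph (e : rel T) : Prop := irreflexive e /\ symmetric e.

Definition connected_graph (e : rel T) : Prop := forall x y, connect e x y.

(* A path in G: nonempty sequence of pairwise distinct vertices with
   consecutive vertices adjacent. Its length is (size s).-1 (number of edges). *)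
Definition gpath (e : rel T) (s : seq T) : bool :=
  if s is x :: s' then path e x s' && uniq s else false.

Definition longest_path (e : rel T) (s : seq T) : Prop :=
  gpath e s /\ forall q, gpath e q -> size q <= size s.

Definition remove_edge (e : rel T) (x y : T) : rel T :=
  fun u v => e u v && ~~ (((u == x) && (v == y)) || ((u == y) && (v == x))).

Definition cut_edge (e : rel T) (x y : T) : Prop :=
  e x y /\ ~ connected_graph (remove_edge e x y).

End Graph.

From mathcomp Require Import all_boot zify.

(* Suppose L and P are disjoint. By connectivity there is a path Q from some
   x = x_i on L to some y = y_j on P whose inner vertices avoid L and P. Either
   piece of L ending at x, followed by Q and by either piece of P starting at y,
   is a path, hence has at most p edges. Adding up these four bounds against
   s >= p - 2 forces Q to be the single edge xy, s = p - 2, i = p/2 and j = s/2.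
   If removing xy left G connected, the same argument in G - xy would yield an
   edge of G - xy joining x_{p/2} to y_{s/2}, i.e. xy itself. *)

Set Implicit Arguments. Unset Strict Implicit. Unset Printing Implicit Defensive.

Section Bridges.
Variables (T : finType) (e : rel T) (A B : pred T).

Definition bridge (x : T) (mid : seq T) (y : T) : Prop :=
  [/\ A x, B y, path e x (rcons mid y), uniq (x :: rcons mid y)
    & {in mid, forall v, ~~ A v && ~~ B v}].

Hypothesis disjAB : forall v, A v -> ~~ B v.

Lemma walk_bridge x mid q :
  A x -> {in mid, forall v, ~~ A v && ~~ B v} ->
  path e x (mid ++ q) -> B (last x (mid ++ q)) ->
  exists x' mid' y, [/\ A x', B y, path e x' (rcons mid' y)
                      & {in mid', forall v, ~~ A v && ~~ B v}].
Proof.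
elim: q x mid => [|z q IHq] x mid Ax mid_out; rewrite ?cats0.
  move=> _; have := mem_last x mid; rewrite in_cons => /orP[/eqP-> | /mid_out].
    by move: (disjAB Ax) => /negPf->.
  by case/andP=> _ /negPf->.
rewrite -cat_rcons cat_path last_cat last_rcons => /andP[ex_mid ez_q] Bq.
case Bz: (B z); first by exists x, mid, z.
case Az: (A z); first exact: (IHq z [::]).
apply: (IHq x (rcons mid z)); rewrite ?cat_path ?last_cat ?last_rcons ?ex_mid //.
by move=> v; rewrite mem_rcons in_cons => /orP[/eqP-> | /mid_out]; rewrite ?Az ?Bz.
Qed.

Lemma shorten_bridge x mid y :
  A x -> B y -> path e x (rcons mid y) ->
  {in mid, forall v, ~~ A v && ~~ B v} -> exists mid', bridge x mid' y.
Proof.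
move=> Ax By e_xy mid_out.
move: (last_rcons x mid y); case/shortenP: e_xy => q e_q uniq_q sub_q.
case/lastP: q => [|mid' y'] in e_q uniq_q sub_q *; rewrite ?last_rcons => /= y_def.
  by move: (disjAB Ax); rewrite y_def By.
subst y'; exists mid'; split => //.
move=> v v_mid'; apply: mid_out.
have: v \in rcons mid y by apply: sub_q; rewrite mem_rcons in_cons v_mid' orbT.
rewrite mem_rcons in_cons => /orP[/eqP v_y | //].
move: uniq_q; rewrite -v_y /= => /andP[_].
by rewrite rcons_uniq v_mid'.
Qed.

Lemma connect_bridge a b :
  connect e a b -> A a -> B b -> exists x mid y, bridge x mid y.
Proof.
case/connectP=> q e_q -> Aa Bq.
have [] // := walk_bridge (mid := [::]) Aa _ e_q Bq.
move=> x [mid [y [Ax By e_xy mid_out]]].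
have [mid' b_xy] := shorten_bridge Ax By e_xy mid_out.
by exists x, mid', y.
Qed.
End Bridges.

Lemma sub_bridge (T : finType) (e1 e2 : rel T) A B x mid y :
  subrel e1 e2 -> bridge e1 A B x mid y -> bridge e2 A B x mid y.
Proof. by move=> sub12 [Ax By /(sub_path sub12) e_xy]. Qed.

Lemma uniq_cat_sep (T : eqType) (C : pred T) (s1 s2 : seq T) :
  uniq s1 -> uniq s2 -> {in s1, forall v, C v} -> {in s2, forall v, ~~ C v} ->
  uniq (s1 ++ s2).
Proof.
move=> uniq1 uniq2 C1 C2; rewrite cat_uniq uniq1 uniq2 andbT /=.
by apply/hasPn => v /C2 nCv; apply: contra nCv => /C1.
Qed.

Section GraphPaths.
Variables (T : finType) (e : rel T).

Lemma gpath_catl s1 s2 : s1 != [::] -> gpath e (s1 ++ s2) -> gpath e s1.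
Proof.
case: s1 => // x s1 _; rewrite /gpath /= cat_path => /andP[/andP[-> _]].
by rewrite mem_cat negb_or cat_uniq => /andP[/andP[-> _] /andP[-> _]].
Qed.

Lemma gpath_catr s1 s2 : s2 != [::] -> gpath e (s1 ++ s2) -> gpath e s2.
Proof.
case: s2 => // y s2 _; case: s1 => // x s1.
rewrite /gpath /= cat_path => /andP[/andP[_ /= /andP[_ ->]]].
by case/andP=> _; rewrite cat_uniq => /and3P[].
Qed.

Lemma gpath_cat x0 s1 s2 :
  gpath e s1 -> path e (last x0 s1) s2 -> uniq (s1 ++ s2) -> gpath e (s1 ++ s2).
Proof. by case: s1 => // x s1; rewrite /gpath /= cat_path => /andP[-> _] -> ->. Qed.

Hypothesis sym_e : symmetric e.

Lemma gpath_rev s : gpath e (rev s) = gpath e s.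
Proof.
suff gpath_revI t : gpath e t -> gpath e (rev t).
  by apply/idP/idP => /gpath_revI; rewrite ?revK.
case: t => // x t /andP[e_t uniq_t].
rewrite lastI rev_rcons /gpath -rev_rcons -lastI rev_uniq uniq_t andbT rev_path.
by apply: sub_path e_t => u v; rewrite sym_e.
Qed.

Lemma split_gpath_at s z : gpath e s -> z \in s ->
  exists U W, [/\ s = U ++ z :: W, gpath e (z :: W), gpath e (z :: rev U),
                  {subset W <= s} & {subset rev U <= s}].
Proof.
move=> gs zs; case/splitPr: zs gs => U W gUzW; exists U, W; split => //.
- exact: gpath_catr gUzW.
- rewrite -rev_rcons gpath_rev; apply: (@gpath_catl _ W); first by case: U {gUzW}.
  by rewrite cat_rcons.
- by move=> v vW; rewrite mem_cat in_cons vW !orbT.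
- by move=> v; rewrite mem_rev mem_cat => ->.
Qed.

Lemma gpath_join x U mid y V :
  gpath e (x :: U) -> gpath e (y :: V) -> path e x (rcons mid y) ->
  uniq (rev (x :: U) ++ mid ++ y :: V) -> gpath e (rev (x :: U) ++ mid ++ y :: V).
Proof.
move=> gxU /andP[e_yV _] e_xy; apply: (@gpath_cat x (rev (x :: U))).
  by rewrite gpath_rev.
by rewrite rev_cons last_rcons -cat_rcons cat_path e_xy last_rcons.
Qed.

End GraphPaths.

Lemma ray_bounds_balanced p s u1 w1 u2 w2 m :
  u1 + w1 = p -> u2 + w2 = s -> p - 2 <= s ->
  u1 + m + u2 + 2 <= p.+1 -> u1 + m + w2 + 2 <= p.+1 ->
  w1 + m + u2 + 2 <= p.+1 -> w1 + m + w2 + 2 <= p.+1 ->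
  [/\ m = 0, s = p - 2, u1 = w1 & u2 = w2].
Proof. by move=> *; split; lia. Qed.

Section LongestPathBridges.
Variables (T : finType) (e : rel T) (L P : seq T).
Hypotheses (sym_e : symmetric e) (longest_L : longest_path e L) (gpath_P : gpath e P).
Hypothesis disjLP : {in L, forall v, v \notin P}.

Lemma bridge_ray_bound x mid y U V :
  bridge e [in L] [in P] x mid y ->
  gpath e (x :: U) -> gpath e (y :: V) -> {subset U <= L} -> {subset V <= P} ->
  size U + size mid + size V + 2 <= size L.
Proof.
move=> [xL yP e_xy uniq_xy mid_out] gxU gyV UL VP.
have xUL : {in rev (x :: U), forall v, v \in L}.
  by move=> v; rewrite mem_rev in_cons => /orP[/eqP-> | /UL].
have yVP : {in y :: V, forall v, v \in P}.
  by move=> v; rewrite in_cons => /orP[/eqP-> | /VP].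
have uniq_join : uniq (rev (x :: U) ++ mid ++ y :: V).
  apply: (@uniq_cat_sep _ [in L]) => //.
  - by rewrite rev_uniq; case/andP: gxU.
  - apply: (@uniq_cat_sep _ [predC [in P]]); last 2 first.
    + by move=> v /mid_out /andP[].
    + by move=> v /yVP /= ->.
    + by move: uniq_xy; rewrite /= rcons_uniq => /and3P[].
    + by case/andP: gyV.
  - move=> v; rewrite mem_cat => /orP[/mid_out /andP[] // | /yVP].
    by apply: contraL => /disjLP.
have := longest_L.2 _ (gpath_join sym_e gxU gyV e_xy uniq_join).
by rewrite !size_cat size_rev /=; lia.
Qed.

Lemma bridge_midpoints p s x mid y :
  size L = p.+1 -> size P = s.+1 -> p - 2 <= s ->
  bridge e [in L] [in P] x mid y ->
  [/\ mid = [::], ~~ odd p, s = p - 2,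
      onth L (p %/ 2) = Some x & onth P (s %/ 2) = Some y].
Proof.
move=> sizeL sizeP ps bxy; have [xL yP _ _ _] := bxy.
have [U1 [W1 [defL gW1 gU1 W1L U1L]]] := split_gpath_at sym_e longest_L.1 xL.
have [U2 [W2 [defP gW2 gU2 W2P U2P]]] := split_gpath_at sym_e gpath_P yP.
have := bridge_ray_bound bxy gW1 gW2 W1L W2P.
have := bridge_ray_bound bxy gW1 gU2 W1L U2P.
have := bridge_ray_bound bxy gU1 gW2 U1L W2P.
have := bridge_ray_bound bxy gU1 gU2 U1L U2P.
have [sizeU1W1 sizeU2W2] : size U1 + size W1 = p /\ size U2 + size W2 = s.
  by move: sizeL sizeP; rewrite defL defP !size_cat /= !addnS => -[] -> [] ->.
rewrite sizeL !size_rev => b1 b2 b3 b4.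
have [m0 sp u1w1 u2w2] := ray_bounds_balanced sizeU1W1 sizeU2W2 ps b1 b2 b3 b4.
have onth_mid U z W : onth (U ++ z :: W) (size U) = Some z.
  by rewrite onth_cat ltnn subnn.
split=> //.
- exact: size0nil.
- by rewrite -sizeU1W1 -u1w1 addnn odd_double.
- by rewrite defL -sizeU1W1 -u1w1 addnn divn2 doubleK onth_mid.
- by rewrite defP -sizeU2W2 -u2w2 addnn divn2 doubleK onth_mid.
Qed.
End LongestPathBridges.

Theorem lemma2 (T : finType) (e : rel T) (L P : seq T) (p s : nat) :
  simple_graph e -> connected_graph e ->
  longest_path e L -> size L = p.+1 -> 2 <= p ->
  gpath e P -> size P = s.+1 -> p - 2 <= s ->
  (exists v, v \in L /\ v \in P) \/
  [/\ ~~ odd p, s = p - 2 &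
      exists x y, [/\ onth L (p %/ 2) = Some x, onth P (s %/ 2) = Some y
                    & cut_edge e x y]].
Proof.
move=> [_ sym_e] conn longL sizeL _ gP sizeP ps.
have [/hasP[v vL vP] | /hasPn disjLP] := boolP (has [in P] L); first by left; exists v.
right.
have /hasP[a aL _] : has predT L by rewrite has_predT sizeL.
have /hasP[b bP _] : has predT P by rewrite has_predT sizeP.
have midpoints := bridge_midpoints sym_e longL gP disjLP sizeL sizeP ps.
have [x [mid [y bxy]]] := connect_bridge disjLP (conn a b) aL bP.
have [mid0 podd sp Lx Py] := midpoints _ _ _ bxy; subst mid.
split=> //; exists x, y; split=> //; split; first by case: bxy => _ _ /andP[].
move/(_ a b)=> conn'.
have [x' [mid' [y' bxy']]] := connect_bridge disjLP conn' aL bP.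
have sub_e : subrel (remove_edge e x y) e by move=> u w /andP[].
have [mid0 _ _ Lx' Py'] := midpoints _ _ _ (sub_bridge sub_e bxy'); subst mid'.
move: Lx' Py'; rewrite Lx Py => -[x'x] [y'y]; subst x' y'.
by case: bxy' => _ _ /andP[]; rewrite /remove_edge !eqxx andbF.
Qed.
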